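(* Let $k\neq 0$, $a$, $b$ be real numbers and let $\{S^{(a,b)}_{k,n}\}_{n\ge 0}$ be the generalized $k$-FL sequence. (a) For an even integer $n\ge 2$, if $S^{(a,b)}_{k,n+1}-S^{(a,b)}_{k,n}\neq -bk+2b-a$, then the matrix $A^{(k,a,b)}_n$ is invertible. (b) For an odd integer $n\ge 1$, the matrix $B^{(k,a,b)}_n$ is invertible if and only if $S^{(a,b)}_{k,n+1}+S^{(a,b)}_{k,n}\neq bk+2b+a$.
   Context: For real numbers $k,a,b$, the generalized $k$-FL sequence $\{S^{(a,b)}_{k,n}\}_{n\ge0}$ is defined by $S^{(a,b)}_{k,0}=2b$, $S^{(a,b)}_{k,1}=bk+a$, and $S^{(a,b)}_{k,n}=k\,S^{(a,b)}_{k,n-1}+S^{(a,b)}_{k,n-2}$ for $n\ge2$. For $n\ge1$, $A^{(k,a,b)}_n$ is the $n\times n$ real skew circulant matrix whose $(i,j)$ entry is $S^{(a,b)}_{k,j-i+1}$ if $j\ge i$ and $-S^{(a,b)}_{k,n+j-i+1}$ if $j<i$. $B^{(k,a,b)}_n$ is the $n\times n$ circulant matrix whose $(i,j)$ entry is $S^{(a,b)}_{k,j-i+1}$ if $j\ge i$ and $S^{(a,b)}_{k,n+j-i+1}$ if $j<i$. *)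

From HB Require Import structures.
From mathcomp Require Import all_boot all_order all_algebra.
From mathcomp Require Import all_reals.
Set Implicit Arguments. Unset Strict Implicit. Unset Printing Implicit Defensive.
Import Order.TTheory GRing.Theory Num.Theory.
Local Open Scope ring_scope.

(* generalized k-FL sequence: S 0 = 2b, S 1 = bk + a, S (n+2) = k S (n+1) + S n *)
Fixpoint FLpair {R : pzRingType} (k a b : R) (n : nat) : R * R :=
  match n with
  | 0%N => (2 * b, b * k + a)
  | n'.+1 => let p := FLpair k a b n' in (p.2, k * p.2 + p.1)
  end.

Definition S_FL {R : pzRingType} (k a b : R) (n : nat) : R := (FLpair k a b n).1.

(* skew circulant matrix A_n (0-based indices; entry (i,j) is S_{j-i+1} if j>=i,
   and -S_{n+j-i+1} if j<i) *)
Definition A_mx {R : pzRingType} (k a b : R) (n : nat) : 'M[R]_n :=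
  \matrix_(i < n, j < n)
    if (i <= j)%N then S_FL k a b (j - i).+1
    else - S_FL k a b (n + j - i).+1.

Definition B_mx {R : pzRingType} (k a b : R) (n : nat) : 'M[R]_n :=
  \matrix_(i < n, j < n)
    if (i <= j)%N then S_FL k a b (j - i).+1
    else S_FL k a b (n + j - i).+1.

From HB Require Import structures.
From mathcomp Require Import all_boot all_order all_algebra.
From mathcomp Require Import all_reals.
From mathcomp Require Import zify ring lra.
Import Order.TTheory GRing.Theory Num.Theory.
Set Implicit Arguments. Unset Strict Implicit. Unset Printing Implicit Defensive.
Local Open Scope ring_scope.

(* Both matrices are of the form T(J) = S_1 + S_2 J + ... + S_N J^(N-1), where J is
   the shift matrix with J^N = s, for s = -1 (skew circulant A) or s = 1 (circulant B).
   Evaluating the generating-function identity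
     (1 - kX - X^2) (S_1 + S_2 X + ... + S_N X^(N-1)) = S_1 + S_0 X - (S_(N+1) + S_N X) X^N
   at J gives (1 - kJ - J^2) T(J) = p + qJ with p = S_1 - s S_(N+1), q = S_0 - s S_N.
   A kernel vector of p + qJ is an eigenvector of J, whose eigenvalue r satisfies
   r^N = s and p + qr = 0. For even N, -1 has no real N-th root; for odd N the only
   real N-th root of 1 is 1, which gives the condition p + q <> 0. Conversely, if
   p + q = 0 then T(1) = 0 (as k <> 0), and the all-ones vector lies in the left
   kernel of T(J) when s = 1. *)

Lemma sum_ord_delta (R : nzSemiRingType) N (F : 'I_N.+1 -> R) t : (t <= N)%N ->
  \sum_(k < N.+1) F k * (k == t :> nat)%:R = F (inord t).
Proof.
move=> le_tN; rewrite (bigD1 (inord t)) /= ?inordK ?eqxx ?mulr1 //.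
rewrite big1 ?addr0 // => k; rewrite -val_eqE /= inordK // => /negbTE ->.
by rewrite mulr0.
Qed.

Section ShiftMatrix.
Variables (R : comNzRingType) (s : R) (n : nat).
Local Notation N := n.+1.

Definition shift_mx : 'M[R]_N :=
  \matrix_(i, j) if (0 < j)%N then (i == j.-1 :> nat)%:R else s * (i == n :> nat)%:R.

Definition circ_mx (c : nat -> R) : 'M[R]_N :=
  \matrix_(i, j) if (i <= j)%N then c (j - i)%N else s * c (N + j - i)%N.

Lemma mulmx_shift_mx m (A : 'M[R]_(m, N)) i j :
  (A *m shift_mx) i j = if (0 < j)%N then A i (inord j.-1) else s * A i ord_max.
Proof.
rewrite mxE; under eq_bigr => k _ do rewrite mxE.
case: ifP => [j_gt0|_]; first by rewrite sum_ord_delta //; have := ltn_ord j; lia.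
under eq_bigr => k _ do rewrite mulrCA.
by rewrite -mulr_sumr sum_ord_delta // -[ord_max]inord_val.
Qed.

Lemma shift_mxX m : (m < N)%N -> shift_mx ^+ m = circ_mx (fun t => (t == m)%:R).
Proof.
elim: m => [|m IHm] ltmN.
  apply/matrixP => i j; rewrite !mxE -val_eqE /=; case: leqP => [le_ij|lt_ji].
    by congr (_%:R); apply/eqP/eqP; lia.
  have /negbTE -> : (N + j - i != 0)%N by have := ltn_ord i; lia.
  by rewrite mulr0 (gtn_eqF lt_ji).
apply/matrixP => i j; rewrite exprSr -mulmxE mulmx_shift_mx IHm ?(ltnW ltmN) //.
have lt_iN := ltn_ord i; have lt_jN := ltn_ord j.
rewrite !mxE; case: (posnP j) => [j0|j_gt0].
  rewrite j0 /= (_ : i <= n)%N //; case: (posnP i) => [i0|i_gt0].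
    by rewrite i0 subn0 (_ : (n == m) = false) ?mulr0 //; apply/eqP; lia.
  by rewrite leqNgt i_gt0 /=; congr (_ * _%:R); apply/eqP/eqP; lia.
rewrite inordK; last lia.
case: (leqP i j.-1) => [le_ij|lt_ji].
  by rewrite (_ : i <= j)%N; [congr (_%:R); apply/eqP/eqP| ]; lia.
case: (leqP i j) => [le_ij|_]; last by congr (_ * _%:R); apply/eqP/eqP; lia.
have -> : i = j :> nat by lia.
by rewrite subnn (_ : (N + j.-1 - j == m)%N = false) ?mulr0 //; apply/eqP; lia.
Qed.

Lemma shift_mx_order : shift_mx ^+ N = s%:M.
Proof.
apply/matrixP => i j; rewrite exprSr -mulmxE mulmx_shift_mx shift_mxX //.
have lt_iN := ltn_ord i; have lt_jN := ltn_ord j.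
rewrite !mxE -val_eqE /=; case: (posnP j) => [j0|j_gt0].
  rewrite j0 /= (_ : i <= n)%N // mulr_natr.
  by rewrite (_ : ((n - i)%N == n) = (i == 0 :> nat)) //; apply/eqP/eqP; lia.
rewrite inordK; last lia.
case: leqP => [le_ij|lt_ji].
  by case: eqP => [|_]; [lia | case: eqP => [|_]; [lia | rewrite mulr0n]].
by rewrite mulr_natr; case: eqP; case: eqP => //; lia.
Qed.

Lemma horner_shift_mx (c : nat -> R) :
  horner_mx shift_mx (\poly_(m < N) c m) = circ_mx c.
Proof.
rewrite poly_def rmorph_sum; apply/matrixP => i j /=; rewrite summxE.
under eq_bigr => m _ do
  rewrite -mul_polyC rmorphM /= horner_mx_C rmorphXn /= horner_mx_X shift_mxX //
          -mulmxE mul_scalar_mx mxE.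
have lt_iN := ltn_ord i; have lt_jN := ltn_ord j.
rewrite mxE; case: leqP => [le_ij|lt_ji].
  under eq_bigr => m _ do rewrite mxE le_ij eq_sym.
  by rewrite (sum_ord_delta (fun m : 'I_N => c m)) ?inordK //; lia.
under eq_bigr => m _ do rewrite mxE leqNgt lt_ji /= mulrCA eq_sym.
by rewrite -mulr_sumr (sum_ord_delta (fun m : 'I_N => c m)) ?inordK //; lia.
Qed.
End ShiftMatrix.

Lemma const1_mul_horner_shift1 (R : comNzRingType) n (P : {poly R}) :
  const_mx 1 *m horner_mx (shift_mx 1 n) P = P.[1] *: (const_mx 1 : 'rV[R]_n.+1).
Proof.
have fix1 : const_mx 1 *m shift_mx 1 n = const_mx 1 :> 'rV[R]_n.+1.
  by apply/rowP => j; rewrite mulmx_shift_mx !mxE; case: ifP; rewrite ?mxE ?mul1r.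
elim/poly_ind: P => [|P c IHP]; first by rewrite rmorph0 mulmx0 horner0 scale0r.
rewrite rmorphD rmorphM /= horner_mx_X horner_mx_C -mulmxE mulmxDr mulmxA IHP.
by rewrite -scalemxAl fix1 mul_mx_scalar hornerE hornerMX hornerC mulr1 scalerDl.
Qed.

Lemma shift_mx_eigenvector (F : fieldType) (s r : F) n (v : 'rV[F]_n.+1) :
  v *m shift_mx s n = r *: v -> r ^+ n.+1 != s -> v = 0.
Proof.
move=> /rowP eig_v rN_neq_s.
have v_pred j : (0 < j <= n)%N -> v 0 (inord j.-1) = r * v 0 (inord j).
  move=> /andP[j_gt0 le_jn]; have := eig_v (inord j).
  by rewrite mulmx_shift_mx !mxE inordK // j_gt0.
have v_last : s * v 0 ord_max = r * v 0 ord0.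
  by have := eig_v ord0; rewrite mulmx_shift_mx !mxE.
have v_pow t : (t <= n)%N -> v 0 (inord (n - t)) = r ^+ t * v 0 ord_max.
  elim: t => [|t IHt] lt_tn; first by rewrite subn0 mul1r -[ord_max]inord_val.
  rewrite (_ : (n - t.+1 = (n - t).-1)%N); last lia.
  by rewrite v_pred ?IHt ?exprS ?mulrA //; lia.
have v_last0 : v 0 ord_max = 0.
  have v_first : v 0 ord0 = r ^+ n * v 0 ord_max.
    by rewrite -v_pow // subnn; congr (v 0 _); apply: val_inj; rewrite /= inordK.
  apply/eqP; move: rN_neq_s; apply: contraNT => nz_v.
  by apply/eqP/(mulIf nz_v); rewrite exprS -mulrA -v_first v_last.
apply/rowP => j; have := v_pow (n - j)%N (leq_subr _ _).
by rewrite subKn ?inord_val ?v_last0 ?mulr0 ?mxE // -ltnS.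
Qed.

Lemma unitmx_scalar_add_shift (F : fieldType) (s p q : F) n :
  (p != 0) || (q != 0) -> (forall r, r ^+ n.+1 = s -> p + q * r != 0) ->
  p%:M + q *: shift_mx s n \in unitmx.
Proof.
move=> nz_pq no_root; rewrite unitmxE unitfE; apply/det0P => -[v nz_v vM].
suff v0 : v = 0 by rewrite v0 eqxx in nz_v.
move: vM; rewrite mulmxDr mul_mx_scalar -scalemxAr => /eqP.
rewrite addr_eq0 => /eqP vJ.
have [q0 | nz_q] := eqVneq q 0.
  move: vJ nz_pq; rewrite q0 scale0r oppr0 eqxx orbF => /eqP.
  by rewrite scalemx_eq0 => /orP[-> | /eqP->].
apply: (@shift_mx_eigenvector F s (- (p / q)) n v).
  by apply: (scalerI nz_q); rewrite scalerA mulrN mulrC divfK // scaleNr vJ opprK.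
apply/eqP => /no_root/eqP[]; rewrite mulrN mulrC divfK //; exact: subrr.
Qed.

Lemma horner_shift1_unitmxN (F : fieldType) n (P : {poly F}) :
  root P 1 -> horner_mx (shift_mx 1 n) P \notin unitmx.
Proof.
move=> /rootP P1; rewrite unitmxE unitfE negbK; apply/det0P.
exists (const_mx 1); last by rewrite const1_mul_horner_shift1 P1 scale0r.
by apply/eqP => /rowP/(_ ord0)/eqP; rewrite !mxE oner_eq0.
Qed.

Section FLSequence.
Variables (R : comNzRingType) (k a b : R).
Local Notation S := (S_FL k a b).

Lemma S_FL0 : S 0 = 2 * b. Proof. by []. Qed.
Lemma S_FL1 : S 1 = b * k + a. Proof. by []. Qed.
Lemma S_FLSS n : S n.+2 = k * S n.+1 + S n. Proof. by []. Qed.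

Definition FL_poly N : {poly R} := \poly_(m < N) S m.+1.

Lemma FL_poly_rec N :
  (1 - k%:P * 'X - 'X^2) * FL_poly N =
  (S 1)%:P + (S 0)%:P * 'X - ((S N.+1)%:P + (S N)%:P * 'X) * 'X^N.
Proof.
elim: N => [|N IHN]; first by rewrite /FL_poly poly_def big_ord0 expr0; ring.
have -> : FL_poly N.+1 = FL_poly N + (S N.+1)%:P * 'X^N.
  by rewrite /FL_poly !poly_def big_ord_recr mul_polyC.
rewrite mulrDr IHN S_FLSS rmorphD rmorphM /= !exprS; ring.
Qed.

Lemma circ_FL_factor s n :
  horner_mx (shift_mx s n) (1 - k%:P * 'X - 'X^2) * circ_mx s n (fun m => S m.+1) =
  (S 1 - s * S n.+2)%:M + (S 0 - s * S n.+1) *: shift_mx s n.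
Proof.
rewrite -horner_shift_mx -rmorphM FL_poly_rec.
move: (S 1) (S 0) (S n.+2) (S n.+1) => x1 x0 y1 y0.
rewrite !(rmorphB, rmorphD, rmorphM, rmorphXn) /= !horner_mx_C horner_mx_X shift_mx_order.
rewrite -!mulmxE mul_mx_scalar !mul_scalar_mx.
move: (shift_mx s n) => J; apply/matrixP => i j; rewrite !mxE; ring.
Qed.

End FLSequence.

Lemma FL_poly_root1 (F : fieldType) (k a b : F) N : k != 0 ->
  S_FL k a b N.+1 + S_FL k a b N = S_FL k a b 1 + S_FL k a b 0 ->
  root (FL_poly k a b N) 1.
Proof.
move=> nz_k S_eq; have /(congr1 (horner^~ 1)) := FL_poly_rec k a b N.
rewrite !hornerE !expr1n !mulr1 S_eq subrr addrAC subrr add0r mulNr => /eqP.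
by rewrite oppr_eq0 mulf_eq0 (negbTE nz_k).
Qed.

Lemma unitmx_circ_FL (F : fieldType) (s k a b : F) n
    (p := S_FL k a b 1 - s * S_FL k a b n.+2) (q := S_FL k a b 0 - s * S_FL k a b n.+1) :
  (p != 0) || (q != 0) -> (forall r, r ^+ n.+1 = s -> p + q * r != 0) ->
  circ_mx s n (fun m => S_FL k a b m.+1) \in unitmx.
Proof.
move=> nz_pq no_root; have := unitmx_scalar_add_shift nz_pq no_root.
by rewrite -circ_FL_factor -mulmxE unitmx_mul => /andP[].
Qed.

Lemma A_mx_circ (R : comNzRingType) (k a b : R) n :
  A_mx k a b n.+1 = circ_mx (-1) n (fun m => S_FL k a b m.+1).
Proof. by apply/matrixP => i j; rewrite !mxE mulN1r. Qed.

Lemma B_mx_circ (R : comNzRingType) (k a b : R) n :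
  B_mx k a b n.+1 = circ_mx 1 n (fun m => S_FL k a b m.+1).
Proof. by apply/matrixP => i j; rewrite !mxE mul1r. Qed.

Lemma exprn_even_neqN1 (R : realDomainType) n (x : R) : ~~ odd n -> x ^+ n != -1.
Proof. by move=> /(exprn_even_ge0 x); apply: contraTneq => ->; rewrite ler0N1. Qed.

Lemma exprn_odd_eq1 (R : realDomainType) n (x : R) : odd n -> (x ^+ n == 1) = (x == 1).
Proof.
move=> odd_n; apply/idP/eqP => [xn1|->]; last by rewrite expr1n.
have x_gt0 : 0 < x by rewrite -(exprn_odd_gt0 _ odd_n) (eqP xn1) ltr01.
by apply/eqP; rewrite -(pexpr_eq1 (odd_gt0 odd_n)) ?ltW.
Qed.

Theorem theorem2p7 (R : realType) (k a b : R) (hk : k != 0) :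
  (forall n : nat, (2 <= n)%N -> ~~ odd n ->
     S_FL k a b n.+1 - S_FL k a b n != - (b * k) + 2 * b - a ->
     A_mx k a b n \in unitmx) /\
  (forall n : nat, odd n ->
     (B_mx k a b n \in unitmx) <->
     (S_FL k a b n.+1 + S_FL k a b n != b * k + 2 * b + a)).
Proof.
split=> [[|n] // _ even_n S_neq | [|n] // odd_n].
  rewrite A_mx_circ; apply: unitmx_circ_FL => [|r /eqP]; last first.
    by rewrite (negbTE (exprn_even_neqN1 r even_n)).
  rewrite -negb_and; apply: contra S_neq => /andP[/eqP p0 /eqP q0].
  by apply/eqP; rewrite S_FL0 S_FL1 in p0 q0; lra.
rewrite B_mx_circ; split=> [unit_B | S_neq].
  apply/negP => /eqP S_eq; move: unit_B; apply/negP.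
  rewrite -horner_shift_mx; apply/horner_shift1_unitmxN/FL_poly_root1 => //.
  by rewrite S_eq S_FL0 S_FL1; ring.
have pq_neq0 :
    (S_FL k a b 1 - 1 * S_FL k a b n.+2) + (S_FL k a b 0 - 1 * S_FL k a b n.+1) != 0.
  by apply: contra S_neq => /eqP pq0; apply/eqP; rewrite S_FL0 S_FL1 in pq0; lra.
apply: unitmx_circ_FL => [|r].
  move: pq_neq0; apply: contraNT; rewrite negb_or !negbK => /andP[/eqP-> /eqP->].
  by rewrite addr0.
by move/eqP; rewrite exprn_odd_eq1 // => /eqP->; rewrite mulr1.
Qed.
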